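(* Let $\mathbb{D}$ be a domain, and let $\mathbb{D}_1, \mathbb{D}_2 \subseteq \mathbb{D}$ be disjoint. For a data set $D$ write $D_1 = D \cap \mathbb{D}_1$ and $D_2 = D \cap \mathbb{D}_2$. Let $M_1$ be an $f_1$-differentially private mechanism and $M_2$ an $f_2$-differentially private mechanism, where $M_2$ takes as input an auxiliary value $y_1$ (an output of $M_1$) together with a data set, and is $f_2$-differentially private in its data argument for every value of $y_1$. Define the joint mechanism $M(D) := (y_1, M_2(y_1, D_2))$ where $y_1 := M_1(D_1)$. Then $M$ is $\mathrm{lce}\{f_1, f_2\}$-differentially private.
   Context: An attribute is a finite set; a domain is $\mathbb{D} = A_1 \times \cdots \times A_m$ for attributes $A_i$; elements of $\mathbb{D}$ are rows. A data set is an element of $\mathbb{N}^{|\mathbb{D}|}$ (a histogram/multiset of rows); for $\mathbb{D}' \subseteq \mathbb{D}$, $D \cap \mathbb{D}'$ is the data set consisting of the rows of $D$ lying in $\mathbb{D}'$. Two data sets are neighboring ($D \sim D'$) if they differ in a single row. For distributions $P,P'$ on the same space, the trade-off function is $T(P,P')(\alpha) := \inf\{\beta_\phi : \alpha_\phi \le \alpha\}$ over measurable rejection rules $0\le\phi\le 1$, with $\alpha_\phi = \mathbb{E}_P[\phi]$, $\beta_\phi = 1-\mathbb{E}_{P'}[\phi]$; a trade-off function is any function of this form. For a trade-off function $f$, a mechanism $M$ is $f$-differentially private if $T(M(D), M(D')) \ge f$ pointwise on $[0,1]$ for all neighboring $D, D'$ (where $M(D)$ denotes the output distribution). The lower convex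 envelope is $\mathrm{lce}\{f_1,f_2\}(x) := \sup\{f(x) : f \text{ convex}, f \le \min\{f_1,f_2\}\}$. *)

From HB Require Import structures.
From mathcomp Require Import all_boot all_order all_algebra.
From mathcomp Require Import all_classical all_reals all_analysis measurable_realfun.

Set Implicit Arguments.
Unset Strict Implicit.
Unset Printing Implicit Defensive.

Import Order.TTheory GRing.Theory Num.Theory.
Local Open Scope classical_set_scope.
Local Open Scope ring_scope.

(* The domain is a finite type [T] of rows; a data set is a histogram. *)
Definition dataset (T : finType) := {ffun T -> nat}.

Definition restr (T : finType) (D : dataset T) (S : {set T}) : dataset T :=
  [ffun x => if x \in S then D x else 0%N].

Definition neighbors (T : finType) (D D' : dataset T) : Prop :=
  exists x : T,
    (forall y, D' y = (D y + (y == x))%N) \/ (forall y, D y = (D' y + (y == x))%N).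

Definition tradeoff (R : realType) d (Y : measurableType d)
    (P P' : set Y -> \bar R) (a : R) : R :=
  inf [set b : R | exists phi : Y -> R,
        [/\ measurable_fun setT phi,
            (forall y, 0 <= phi y <= 1),
            fine (\int[P]_y (phi y)%:E) <= a &
            b = 1 - fine (\int[P']_y (phi y)%:E)]].

Definition is_tradeoff (R : realType) (f : R -> R) : Prop :=
  exists (d : measure_display) (Y : measurableType d) (P P' : probability Y R),
    forall a, a \in `[0, 1] -> f a = tradeoff (P : set Y -> \bar R) P' a.

Definition fDP (R : realType) (T : finType) d (Y : measurableType d)
    (f : R -> R) (M : dataset T -> set Y -> \bar R) : Prop :=
  forall D D', neighbors D D' ->
    forall a, a \in `[0, 1] -> f a <= tradeoff (M D) (M D') a.

Definition lce (R : realType) (f1 f2 : R -> R) (x : R) : R :=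
  sup [set v : R | exists g : R -> R,
        [/\ convex_function (E := R^o) `[0, 1] g,
            (forall t, t \in `[0, 1] -> g t <= Num.min (f1 t) (f2 t)) &
            v = g x]].

(* Output distribution of the joint mechanism M(D) = (y1, M2(y1, D2)),
   y1 = M1(D1):  M(D)(A) = \int_{y1} M2(y1, D2)({y2 | (y1,y2) \in A}) dM1(D1). *)
Definition joint_mech (R : realType) (T : finType) d1 d2
    (Y1 : measurableType d1) (Y2 : measurableType d2)
    (M1 : dataset T -> probability Y1 R) (M2 : Y1 -> dataset T -> probability Y2 R)
    (S1 S2 : {set T}) (D : dataset T) : set (Y1 * Y2) -> \bar R :=
  fun A => (\int[M1 (restr D S1)]_y1 M2 y1 (restr D S2) (xsection A y1))%E.

Definition aux_measurable (R : realType) (T : finType) d1 d2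
    (Y1 : measurableType d1) (Y2 : measurableType d2)
    (M2 : Y1 -> dataset T -> probability Y2 R) : Prop :=
  forall (D : dataset T) (B : set Y2), measurable B ->
    measurable_fun setT (fun y1 => M2 y1 D B).

From HB Require Import structures.
From mathcomp Require Import all_boot all_order all_algebra.
From mathcomp Require Import all_classical all_reals all_analysis measurable_realfun.
From mathcomp Require Import ring lra.

Set Implicit Arguments.
Unset Strict Implicit.
Unset Printing Implicit Defensive.

Import Order.TTheory GRing.Theory Num.Theory.
Local Open Scope ring_scope.

(* Let D, D' differ in one row x and let phi be a rejection rule on the joint
   output.  Writing alpha_D y1 for the mean of phi (y1, _) under M2 (y1, D2),
   the mean of phi under M(D) is the mean of alpha_D under M1(D1).  The two
   parts of the domain being disjoint, x misses one of them.  If x is not in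
   the second part, alpha_D = alpha_D' is a rejection rule for M1, so f1 a (or
   1 - a if also D1 = D'1) bounds the error, and f1 dominates lce {f1, f2}.
   If x is in the second part, M1(D1) = M1(D'1) and f2 (alpha_D y1) <= 1 -
   alpha_D' y1 for every y1.  For convex g below f1 and f2, max (g, 0) is
   convex, nonnegative, vanishes at 1 and stays below f2, so a Jensen-type
   inequality averages these bounds over y1 into g a <= 1 - E alpha_D'. *)

Definition rejection_rule (R : realType) d (Y : measurableType d) (phi : Y -> R) :=
  measurable_fun setT phi /\ forall y, 0 <= phi y <= 1.

Lemma rejection_rule_cst (R : realType) d (Y : measurableType d) (t : R) :
  0 <= t <= 1 -> rejection_rule (cst t : Y -> R).
Proof. by split => //; exact: measurable_cst. Qed.

Lemma rejection_rule_pair (R : realType) d1 d2 (Y1 : measurableType d1)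
    (Y2 : measurableType d2) (phi : Y1 * Y2 -> R) (y : Y1) :
  rejection_rule phi -> rejection_rule (fun z => phi (y, z)).
Proof.
by case=> mphi phi01; split => //; exact: measurableT_comp mphi (pair1_measurable y).
Qed.

Lemma rejection_rule_compl (R : realType) d (Y : measurableType d) (phi : Y -> R) :
  rejection_rule phi -> rejection_rule (fun y => 1 - phi y).
Proof.
case=> mphi phi01; split; first exact: measurable_funB.
by move=> y; have /andP[phi0 phi1] := phi01 y; apply/andP; split; lra.
Qed.

Section probability_Rintegral.
Context (R : realType) d (Y : measurableType d) (P : probability Y R).

Lemma integrable_bounded (h : Y -> R) (C : R) : measurable_fun setT h ->
  (forall y, `|h y| <= C) -> P.-integrable setT (EFin \o h).
Proof.
move=> mh hC; apply: measurable_bounded_integrable => //.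
  exact: le_lt_trans (probability_le1 P measurableT) (ltry 1).
exists C; split; first by rewrite num_real.
by move=> M CM y _; apply: le_trans (hC y) (ltW CM).
Qed.

Lemma integrable_rejection_rule (phi : Y -> R) :
  rejection_rule phi -> P.-integrable setT (EFin \o phi).
Proof.
case=> mphi phi01; apply: (integrable_bounded (C := 1)) => // y.
by have /andP[phi0 phi1] := phi01 y; rewrite ger0_norm.
Qed.

Lemma Rintegral_probability_cst (c : R) : \int[P]_y c = c.
Proof.
rewrite Rintegral_cst // (_ : fine (P setT) = 1) ?mulr1 //.
exact: (congr1 fine (probability_setT P)).
Qed.

Lemma integrable_scale (h : Y -> R) (k : R) : P.-integrable setT (EFin \o h) ->
  P.-integrable setT (EFin \o (fun y => k * h y)).
Proof.
move=> hi; apply: (eq_integrable measurableT (fun y => k%:E * (h y)%:E)%E).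
  by move=> y _; rewrite /= EFinM.
exact: integrableZl.
Qed.

Lemma integrable_affine (h : Y -> R) (c k : R) : P.-integrable setT (EFin \o h) ->
  P.-integrable setT (EFin \o (fun y => c + k * h y)).
Proof.
move=> hi.
apply: (eq_integrable measurableT
  ((EFin \o cst c) \+ (EFin \o (fun y => (k * h y)%R)))%E).
  by move=> y _; rewrite /= EFinD.
apply: integrableD => //; first exact: finite_measure_integrable_cst.
exact: integrable_scale.
Qed.

Lemma Rintegral_affine (h : Y -> R) (c k : R) : P.-integrable setT (EFin \o h) ->
  \int[P]_y (c + k * h y) = c + k * \int[P]_y h y.
Proof.
move=> hi; rewrite RintegralD //.
- by rewrite Rintegral_probability_cst RintegralZl.
- exact: finite_measure_integrable_cst.
- exact: integrable_scale.
Qed.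

Lemma Rintegral_rejection_rule (phi : Y -> R) :
  rejection_rule phi -> 0 <= \int[P]_y phi y <= 1.
Proof.
move=> rphi; have [_ phi01] := rphi; apply/andP; split.
  by apply: Rintegral_ge0 => y _; have /andP[] := phi01 y.
rewrite -[leRHS](Rintegral_probability_cst 1); apply: le_Rintegral => //.
- exact: integrable_rejection_rule.
- exact: finite_measure_integrable_cst.
- by move=> y _; have /andP[] := phi01 y.
Qed.

Lemma Rintegral_ge_ae (h : Y -> R) (c : R) : 0 <= c -> (forall y, 0 <= h y) ->
  P.-integrable setT (EFin \o h) -> {ae P, forall y, setT y -> c <= h y} ->
  c <= \int[P]_y h y.
Proof.
move=> c0 h0 hi ch.
rewrite -[leLHS](Rintegral_probability_cst c); apply: fine_le.
- exact/integrable_fin_num/finite_measure_integrable_cst.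
- exact: integrable_fin_num.
apply: ae_ge0_le_integral => //; last by case/integrableP: hi.
by move=> y _; rewrite lee_fin.
Qed.

Lemma Rintegral_eq0_ae (phi : Y -> R) : rejection_rule phi ->
  \int[P]_y phi y = 0 -> {ae P, forall y, setT y -> phi y = 0}.
Proof.
move=> rphi E0; have [mphi phi01] := rphi.
have mphiE : measurable_fun setT (EFin \o phi) by exact/measurable_EFinP.
have /(ae_eq_integral_abs P measurableT mphiE) : (\int[P]_y `|(phi y)%:E| = 0)%E.
  transitivity (\int[P]_y phi y)%:E; last by rewrite E0.
  rewrite /Rintegral fineK; last first.
    exact: integrable_fin_num (integrable_rejection_rule rphi).
  apply: eq_integral => y _; rewrite gee0_abs // lee_fin.
  by have /andP[] := phi01 y.
by apply: filterS => y phi0 /phi0 [->].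
Qed.

End probability_Rintegral.

Lemma measurable_fun_pprobability (R : realType) d d' (X : measurableType d)
    (Y : measurableType d') (P : X -> probability Y R) :
  (forall U, measurable U -> measurable_fun setT (P ^~ U)) ->
  measurable_fun setT (P : X -> pprobability Y R).
Proof.
move=> mP; apply: (measurability (@pset _ _ _ : set (set (pprobability Y R)))) => //.
by move=> _ -[_ [r r01] [U mU <-]] <-; apply: emeasurable_fun_infty_o => //; exact: mP.
Qed.

Section graph_measure.
Context (R : realType) d1 d2 (Y1 : measurableType d1) (Y2 : measurableType d2).
Variables (N : Y1 -> probability Y2 R) (y : Y1).

Definition graph_measure (A : set (Y1 * Y2)) : \bar R := N y (xsection A y).

Let graph_measure0 : graph_measure set0 = 0%E.
Proof. by rewrite /graph_measure xsection0 measure0. Qed.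

Let graph_measure_ge0 A : (0 <= graph_measure A)%E.
Proof. exact: measure_ge0. Qed.

Let graph_measure_sigma_additive : semi_sigma_additive graph_measure.
Proof.
move=> F mF tF mUF; rewrite /graph_measure xsection_bigcup.
apply: measure_semi_sigma_additive.
- by move=> n; exact: measurable_xsection.
- exact: trivIset_xsection.
- by rewrite -xsection_bigcup; exact: measurable_xsection.
Qed.

HB.instance Definition _ := isMeasure.Build _ _ _ graph_measure
  graph_measure0 graph_measure_ge0 graph_measure_sigma_additive.

Let graph_measure_setT : graph_measure setT = 1%E.
Proof. by rewrite /graph_measure xsectionE preimage_setT probability_setT. Qed.

HB.instance Definition _ := Measure_isProbability.Build _ _ _ graph_measure
  graph_measure_setT.

End graph_measure.

Section graph_mixture.
Local Open Scope ereal_scope.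
Context (R : realType) d1 d2 (Y1 : measurableType d1) (Y2 : measurableType d2).
Variables (P : probability Y1 R) (N : Y1 -> probability Y2 R).
Hypothesis mN : forall B, measurable B -> measurable_fun setT (N ^~ B).

Lemma measurable_graph_measure :
  measurable_fun setT (graph_measure N : Y1 -> pprobability (Y1 * Y2)%type R).
Proof.
apply: measurable_fun_pprobability => A mA.
pose kN := kprobability (measurable_fun_pprobability mN).
by apply: (measurable_fun_xsection_finite_kernel kN); rewrite inE.
Qed.

(* The law of (y1, y2) with y1 ~ P and y2 ~ N y1, written as a composition of
   kernels out of [unit] so that integral_kcomp computes its integrals. *)
Definition graph_mixture : {measure set (Y1 * Y2) -> \bar R} :=
  mkcomp
    (kprobability (measurable_cst (P : pprobability Y1 R) : measurable_fun [set: unit] _))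
    (kprobability (measurableT_comp measurable_graph_measure
                     (@measurable_snd _ _ unit Y1))) tt.

Let graph_mixture_setT : graph_mixture setT = 1.
Proof.
rewrite /graph_mixture /= /kcomp /=.
rewrite (eq_integral (fun=> 1)); last by move=> y _; exact: probability_setT.
by rewrite integral_cst // mul1e; exact: probability_setT.
Qed.

HB.instance Definition _ := Measure.on graph_mixture.
HB.instance Definition _ :=
  Measure_isProbability.Build _ _ _ graph_mixture graph_mixture_setT.

Lemma integral_graph_mixture (f : Y1 * Y2 -> \bar R) :
  measurable_fun setT f -> (forall z, 0 <= f z) ->
  \int[graph_mixture]_z f z = \int[P]_y \int[N y]_z f (y, z).
Proof.
move=> mf f0; rewrite integral_kcomp //; apply: eq_integral => y _.
transitivity (\int[pushforward (N y) (pair y)]_z f z).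
  by apply: eq_measure_integral => A _ _; rewrite /= /graph_measure xsectionE.
by rewrite ge0_integral_pushforward.
Qed.

End graph_mixture.

Lemma rejection_rule_section_mean (R : realType) d1 d2 (Y1 : measurableType d1)
    (Y2 : measurableType d2) (N : Y1 -> probability Y2 R) (phi : Y1 * Y2 -> R) :
  (forall B, measurable B -> measurable_fun setT (N ^~ B)) -> rejection_rule phi ->
  rejection_rule (fun y => \int[N y]_z phi (y, z)).
Proof.
move=> mN rphi; have [mphi phi01] := rphi; split; last first.
  by move=> y; apply: Rintegral_rejection_rule; exact: rejection_rule_pair.
apply: (measurableT_comp (fine_measurable measurableT)).
apply: (measurable_fun_integral_finite_kernel (EFin \o phi)
  (kprobability (measurable_fun_pprobability mN))).
- by move=> z; rewrite lee_fin; have /andP[] := phi01 z.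
- exact/measurable_EFinP.
Qed.

Lemma Rintegral_graph_mixture (R : realType) d1 d2 (Y1 : measurableType d1)
    (Y2 : measurableType d2) (P : probability Y1 R) (N : Y1 -> probability Y2 R)
    (mN : forall B, measurable B -> measurable_fun setT (N ^~ B)) (phi : Y1 * Y2 -> R) :
  rejection_rule phi ->
  \int[graph_mixture P mN]_z phi z = \int[P]_y \int[N y]_z phi (y, z).
Proof.
move=> rphi; have [mphi phi01] := rphi.
rewrite /Rintegral integral_graph_mixture //; last 2 first.
- exact/measurable_EFinP.
- by move=> z; rewrite lee_fin; have /andP[] := phi01 z.
congr fine; apply: eq_integral => y _; rewrite fineK //.
exact/integrable_fin_num/integrable_rejection_rule/rejection_rule_pair.
Qed.

Section tradeoff.
Context (R : realType) d (Y : measurableType d) (P P' : probability Y R).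

Lemma tradeoff_le (phi : Y -> R) (a : R) : rejection_rule phi ->
  \int[P]_y phi y <= a -> tradeoff P P' a <= 1 - \int[P']_y phi y.
Proof.
move=> rphi Pa; apply: ge_inf; last by exists phi; case: rphi.
exists 0 => _ [psi [mpsi psi01 _ ->]].
by rewrite subr_ge0; have /andP[] := Rintegral_rejection_rule P' (conj mpsi psi01).
Qed.

Lemma le_tradeoff (a b : R) : 0 <= a ->
  (forall phi : Y -> R, rejection_rule phi ->
    \int[P]_y phi y <= a -> b <= 1 - \int[P']_y phi y) ->
  b <= tradeoff P P' a.
Proof.
move=> a0 hb; apply: lb_le_inf.
  have [m0 b0] : rejection_rule (cst 0 : Y -> R).
    by apply: rejection_rule_cst; rewrite lexx ler01.
  exists (1 - \int[P']_y (cst 0 : Y -> R) y), (cst 0); split => //.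
  by rewrite [leLHS](Rintegral_probability_cst P 0).
by move=> _ [phi [mphi phi01 Pa ->]]; exact: hb.
Qed.

Lemma tradeoff_ge0 (a : R) : 0 <= a -> 0 <= tradeoff P P' a.
Proof.
move=> a0; apply: le_tradeoff => // phi rphi _.
by rewrite subr_ge0; have /andP[] := Rintegral_rejection_rule P' rphi.
Qed.

Lemma tradeoff_le_compl (a : R) : 0 <= a <= 1 -> tradeoff P P' a <= 1 - a.
Proof.
move=> a01; have := @tradeoff_le (cst a) a (rejection_rule_cst _ a01).
by rewrite !Rintegral_probability_cst; apply.
Qed.

End tradeoff.

Lemma is_tradeoff_ge0 (R : realType) (f : R -> R) (t : R) :
  is_tradeoff f -> t \in `[0, 1] -> 0 <= f t.
Proof.
move=> [d [Y [P [P' hf]]]] t01; rewrite hf //.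
by apply: tradeoff_ge0; rewrite in_itv in t01; case/andP: t01.
Qed.

Lemma is_tradeoff_le_compl (R : realType) (f : R -> R) (t : R) :
  is_tradeoff f -> t \in `[0, 1] -> f t <= 1 - t.
Proof.
move=> [d [Y [P [P' hf]]]] t01; rewrite hf //.
by apply: tradeoff_le_compl; rewrite in_itv in t01.
Qed.

Lemma fDP_rejection_rule (R : realType) (T : finType) d (Y : measurableType d)
    (f : R -> R) (M : dataset T -> probability Y R) (D D' : dataset T)
    (phi : Y -> R) (a : R) :
  fDP f (fun D => (M D : set Y -> \bar R)) -> neighbors D D' -> a \in `[0, 1] ->
  rejection_rule phi -> \int[M D]_y phi y <= a -> f a <= 1 - \int[M D']_y phi y.
Proof.
move=> hM DD' a01 rphi Da.
exact: le_trans (hM _ _ DD' _ a01) (tradeoff_le _ rphi Da).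
Qed.

Section restr_neighbors.
Context (T : finType) (D D' : dataset T) (x : T).
Hypothesis DD' : (forall y, D' y = (D y + (y == x))%N) \/
                 (forall y, D y = (D' y + (y == x))%N).

Lemma restr_notin (S : {set T}) : x \notin S -> restr D S = restr D' S.
Proof.
move=> xS; apply/ffunP => y; rewrite !ffunE; case: ifP => // yS.
have /negbTE yx : y != x by apply: contraNneq xS => <-.
by case: DD' => ->; rewrite yx addn0.
Qed.

Lemma neighbors_restr (S : {set T}) : x \in S -> neighbors (restr D S) (restr D' S).
Proof.
move=> xS; exists x; case: DD' => h; [left|right] => y; rewrite !ffunE;
  case: ifP => yS; rewrite ?h //;
  by have /negbTE -> : y != x by apply: contraFneq yS => ->.
Qed.

End restr_neighbors.

Section convex01.
Local Open Scope classical_set_scope.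
Context (R : realType).
Implicit Types m : R -> R.

Definition convex01 m := forall x y t : R,
  0 <= x <= 1 -> 0 <= y <= 1 -> 0 <= t <= 1 ->
  m (t * x + (1 - t) * y) <= t * m x + (1 - t) * m y.

Lemma convex_function_convex01 m : convex_function (E := R^o) `[0, 1] m -> convex01 m.
Proof.
move=> cm x y t /andP[x0 x1] /andP[y0 y1] /andP[t0 t1].
by apply: (cm (Itv01 t0 t1)); rewrite inE /= in_itv /= ?x0 ?y0.
Qed.

Lemma convex01_cst (c : R) : convex01 (cst c).
Proof. by move=> x y t _ _ _ /=; lra. Qed.

Lemma convex01_max m1 m2 :
  convex01 m1 -> convex01 m2 -> convex01 (fun t => Num.max (m1 t) (m2 t)).
Proof.
move=> c1 c2 x y t x01 y01 /[dup] t01 /andP[t0 t1]; rewrite ge_max; apply/andP; split.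
- apply: le_trans (c1 x y t x01 y01 t01) _.
  by apply: lerD; apply: ler_wpM2l; rewrite ?subr_ge0 ?le_max ?lexx.
- apply: le_trans (c2 x y t x01 y01 t01) _.
  by apply: lerD; apply: ler_wpM2l; rewrite ?subr_ge0 ?le_max ?lexx ?orbT.
Qed.

Lemma convex01_slope_le m (t a u : R) : convex01 m ->
  0 <= t -> t < a -> a < u -> u <= 1 ->
  (m a - m t) / (a - t) <= (m u - m a) / (u - a).
Proof.
move=> cm t0 ta au u1.
pose l := (u - a) / (u - t).
have l01 : 0 <= l <= 1.
  by apply/andP; split; rewrite /l ?divr_ge0 ?ler_pdivrMr; lra.
have al : a = l * t + (1 - l) * u by rewrite /l; field; lra.
have chord : (u - t) * m a <= (u - a) * m t + (a - t) * m u.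
  have := ler_wpM2l (_ : 0 <= u - t) (cm t u l _ _ l01); rewrite -al.
  have -> : (u - t) * (l * m t + (1 - l) * m u) = (u - a) * m t + (a - t) * m u.
    by rewrite /l; field; lra.
  by apply; [lra|apply/andP; lra|apply/andP; lra].
rewrite ler_pdivrMr; last lra.
rewrite mulrAC ler_pdivlMr; last lra.
nra.
Qed.

Lemma convex01_support m (a : R) : convex01 m -> 0 < a -> a < 1 -> m 1 <= m a ->
  exists2 s, s <= 0 & forall t, 0 <= t <= 1 -> m a + s * (t - a) <= m t.
Proof.
move=> cm a0 a1 m1a.
(* The supremum of the slopes of the chords ending at a is a subgradient. *)
pose L := [set (m a - m t) / (a - t) | t in [set t | 0 <= t < a]].
have L0 : L !=set0 by exists ((m a - m 0) / (a - 0)); exists 0; rewrite //= lexx.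
have Lub u : a < u -> u <= 1 -> ubound L ((m u - m a) / (u - a)).
  by move=> au u1 _ [t /= /andP[t0 ta] <-]; exact: convex01_slope_le.
have supL : has_sup L by split => //; exists ((m 1 - m a) / (1 - a)); exact: Lub.
exists (sup L).
  apply: le_trans (ge_sup L0 (Lub 1 a1 (lexx _))) _.
  by rewrite pmulr_lle0 ?invr_gt0 ?subr_gt0 // subr_le0.
move=> t /andP[t0 t1].
have [ta|ta|->] := ltgtP t a; last by rewrite subrr mulr0 addr0.
- have : (m a - m t) / (a - t) <= sup L.
    by apply: sup_upper_bound => //; exists t => //=; rewrite t0 ta.
  by rewrite ler_pdivrMr; [nra|lra].
- have : sup L <= (m t - m a) / (t - a) by exact: ge_sup L0 (Lub t ta t1).
  by rewrite ler_pdivlMr; [nra|lra].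
Qed.

End convex01.

Lemma convex01_le_Rintegral (R : realType) d (Y : measurableType d) (P : probability Y R)
    (m : R -> R) (alpha h : Y -> R) (a : R) :
  convex01 m -> m 1 = 0 -> (forall t, 0 <= t <= 1 -> 0 <= m t) ->
  rejection_rule alpha -> P.-integrable setT (EFin \o h) ->
  (forall y, m (alpha y) <= h y) -> 0 <= a <= 1 -> \int[P]_y alpha y <= a ->
  m a <= \int[P]_y h y.
Proof.
move=> cm m1 m0 ralpha hi mh /andP[a0 a1] Ea.
have [_ alpha01] := ralpha.
have h0 y : 0 <= h y := le_trans (m0 _ (alpha01 y)) (mh y).
have [a_lt1|a_ge1] := ltP a 1; last first.
  have -> : a = 1 by apply/le_anti/andP.
  by rewrite m1; apply: Rintegral_ge0.
have [a_gt0|a_le0] := ltP 0 a.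
  have ma0 : m 1 <= m a by rewrite m1 m0 ?a0 ?a1.
  have [s s0 hs] := convex01_support cm a_gt0 a_lt1 ma0.
  apply: le_trans (_ : m a + s * (\int[P]_y alpha y - a) <= _); first nra.
  rewrite mulrBr addrA addrAC.
  rewrite -(Rintegral_affine _ _ (integrable_rejection_rule P ralpha)).
  apply: le_Rintegral => //; first exact/integrable_affine/integrable_rejection_rule.
  move=> y _; apply: le_trans (mh y); apply: le_trans (hs _ (alpha01 y)); lra.
(* At a = 0 there may be no support line, but then alpha = 0 almost surely. *)
have a_eq0 : a = 0 by apply/le_anti/andP.
rewrite a_eq0 in Ea *.
have /andP[Ealpha0 _] := Rintegral_rejection_rule P ralpha.
have alpha_ae0 : {ae P, forall y, setT y -> alpha y = 0}.
  by apply: (Rintegral_eq0_ae ralpha); apply/le_anti/andP; split.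
apply: Rintegral_ge_ae => //; first by rewrite m0 ?lexx ?ler01.
by apply: filterS alpha_ae0 => y alpha0 /alpha0 alpha_y0; rewrite -alpha_y0.
Qed.

Lemma lce_le (R : realType) (f1 f2 : R -> R) (a b : R) : 0 <= b ->
  (forall g : R -> R, convex_function (E := R^o) `[0, 1] g ->
     (forall t, t \in `[0, 1] -> g t <= Num.min (f1 t) (f2 t)) -> g a <= b) ->
  lce f1 f2 a <= b.
Proof.
move=> b0 hb; rewrite /lce; set S := (X in sup X).
have [->|/set0P S0] := eqVneq S set0; first by rewrite sup0.
by apply: ge_sup S0 _ => _ [g [cg hg ->]]; exact: hb.
Qed.

Lemma lce_le_l (R : realType) (f1 f2 : R -> R) (a : R) :
  is_tradeoff f1 -> a \in `[0, 1] -> lce f1 f2 a <= f1 a.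
Proof.
move=> tr1 a01; apply: lce_le => [|g _ hg]; first exact: is_tradeoff_ge0 tr1 a01.
by have := hg a a01; rewrite le_min => /andP[].
Qed.

Lemma lce_le_mixture (R : realType) d (Y : measurableType d) (P : probability Y R)
    (f1 f2 : R -> R) (alpha beta : Y -> R) (a : R) :
  is_tradeoff f1 -> is_tradeoff f2 -> rejection_rule alpha -> rejection_rule beta ->
  (forall y, f2 (alpha y) <= 1 - beta y) -> a \in `[0, 1] ->
  \int[P]_y alpha y <= a -> lce f1 f2 a <= 1 - \int[P]_y beta y.
Proof.
move=> tr1 tr2 ralpha rbeta f2ab a01 Ea.
have itv01 (t : R) : (t \in `[0, 1]) = (0 <= t <= 1) by rewrite in_itv.
have [_ alpha01] := ralpha.
apply: lce_le => [|g cg hg].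
  by rewrite subr_ge0; have /andP[] := Rintegral_rejection_rule P rbeta.
pose m t := Num.max (g t) 0.
have m0 t : 0 <= m t by rewrite le_max lexx orbT.
have m_f2 t : 0 <= t <= 1 -> m t <= f2 t.
  rewrite -itv01 => t01; rewrite ge_max (is_tradeoff_ge0 tr2 t01) andbT.
  by have := hg t t01; rewrite le_min => /andP[].
have m1 : m 1 = 0.
  have h1 : (1 : R) \in `[0, 1] by rewrite itv01 lexx ler01.
  apply/max_idPr; have := hg 1 h1; rewrite le_min => /andP[g1 _].
  by apply: le_trans g1 _; rewrite -(subrr 1); exact: is_tradeoff_le_compl tr1 h1.
have cm : convex01 m.
  exact: convex01_max (convex_function_convex01 cg) (convex01_cst 0).
have m_alpha y : m (alpha y) <= 1 - beta y := le_trans (m_f2 _ (alpha01 y)) (f2ab y).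
have := convex01_le_Rintegral cm m1 (fun t _ => m0 t) ralpha
  (integrable_rejection_rule P (rejection_rule_compl rbeta)) m_alpha.
rewrite itv01 in a01; move=> /(_ a a01 Ea).
rewrite RintegralB ?Rintegral_probability_cst //; last 2 first.
- exact: finite_measure_integrable_cst.
- exact: integrable_rejection_rule.
by apply: le_trans; rewrite le_max lexx.
Qed.

Lemma joint_mechE (R : realType) (T : finType) (S1 S2 : {set T}) d1 d2
    (Y1 : measurableType d1) (Y2 : measurableType d2)
    (M1 : dataset T -> probability Y1 R) (M2 : Y1 -> dataset T -> probability Y2 R)
    (mM2 : aux_measurable M2) (D : dataset T) :
  joint_mech M1 M2 S1 S2 D = graph_mixture (M1 (restr D S1)) (mM2 (restr D S2)).
Proof. by []. Qed.

Theorem theorem5 (R : realType) (T : finType) (S1 S2 : {set T})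
    (d1 d2 : measure_display) (Y1 : measurableType d1) (Y2 : measurableType d2)
    (f1 f2 : R -> R)
    (M1 : dataset T -> probability Y1 R)
    (M2 : Y1 -> dataset T -> probability Y2 R) :
  [disjoint S1 & S2] ->
  is_tradeoff f1 -> is_tradeoff f2 ->
  (* M2 is measurable in its auxiliary argument (a Markov kernel) *)
  aux_measurable M2 ->
  fDP f1 (fun D => (M1 D : set Y1 -> \bar R)) ->
  (forall y1 : Y1, fDP f2 (fun D => (M2 y1 D : set Y2 -> \bar R))) ->
  fDP (lce f1 f2) (joint_mech M1 M2 S1 S2).
Proof.
move=> S12 tr1 tr2 mM2 dp1 dp2 D D' [x DD'] a a01.
rewrite !(joint_mechE _ _ _ mM2); apply: le_tradeoff => [|phi rphi].
  by rewrite in_itv in a01; case/andP: a01.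
rewrite !Rintegral_graph_mixture //.
have ralpha E := rejection_rule_section_mean (mM2 (restr E S2)) rphi.
have [xS2|xS2] := boolP (x \in S2).
  have xS1 : x \notin S1 by rewrite (disjointFl S12 xS2).
  rewrite -(restr_notin DD' xS1) => Ea.
  apply: lce_le_mixture tr1 tr2 (ralpha D) (ralpha D') _ a01 Ea => y.
  have rphi_y := rejection_rule_pair y rphi.
  have alpha01 : \int[M2 y (restr D S2)]_z phi (y, z) \in `[0, 1].
    by rewrite in_itv; exact: Rintegral_rejection_rule rphi_y.
  exact: fDP_rejection_rule (dp2 y) (neighbors_restr DD' xS2) alpha01 rphi_y (lexx _).
rewrite -(restr_notin DD' xS2) => Ea.
apply: le_trans (lce_le_l f2 tr1 a01) _.
have [xS1|xS1] := boolP (x \in S1).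
  exact: fDP_rejection_rule dp1 (neighbors_restr DD' xS1) a01 (ralpha D) Ea.
by rewrite -(restr_notin DD' xS1); have := is_tradeoff_le_compl tr1 a01; lra.
Qed.
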